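(* Let $f_1,\dots,f_T\in\mathcal F_X(\alpha,l,G)$. Online gradient descent (OGD) with stepsize $\gamma=1/l$ is defined by $$x_1=x_0,\qquad x_t=\Pi_X\big(x_{t-1}-\gamma\nabla f_{t-1}(x_{t-1})\big)\quad\text{for }2\le t\le T.$$ Its dynamic regret satisfies $\mathrm{Reg}(\mathrm{OGD},\mathcal L_T(L_T,\mathcal F_X(\alpha,l,G)))\le \delta L_T$, where $\delta=(\beta/l+1)\frac{G}{1-\kappa}$ and $\kappa=\sqrt{1-\alpha/l}$.
   Context: Setting: $X\subseteq\mathbb R^n$ is nonempty, compact and convex with diameter $D$. The parameter $\beta\ge0$, the initial point $x_0\in X$ and the horizon $T\ge1$ are fixed, and $\Pi_X$ is Euclidean projection onto $X$. Function class: for $0<\alpha\le l$ and $G>0$, $\mathcal F_X(\alpha,l,G)$ is the set of differentiable $f:\mathbb R^n\to\mathbb R$ that are $\alpha$-strongly convex and $l$-smooth on $\mathbb R^n$, meaning $$f(x)+\langle\nabla f(x),y-x\rangle+\tfrac\alpha2\|y-x\|^2\le f(y)\le f(x)+\langle\nabla f(x),y-x\rangle+\tfrac l2\|y-x\|^2,$$ and that satisfy $\|\nabla f\|\le G$ on $X$. Total cost: $C_1^T(x)=\sum_{t=1}^T(f_t(x_t)+\frac\beta2\|x_t-x_{t-1}\|^2)$. Path length: $\theta_t=\arg\min_X f_t$ and $\theta_0=x_0$. For $0\le L_T\le DT$, $\mathcal L_T(L_T,\mathcal F_X(\alpha,l,G))$ is the set of sequences $\{f_t\}_{t=1}^T\subseteq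 \mathcal F_X(\alpha,l,G)$ with $\sum_{t=1}^T\|\theta_t-\theta_{t-1}\|\le L_T$. Dynamic regret: $\mathrm{Reg}(\mathcal A,\mathcal L_T)=\sup_{\{f_t\}\in\mathcal L_T}\big(C_1^T(x^{\mathcal A})-\min_{x\in X^T}C_1^T(x)\big)$, where $x^{\mathcal A}$ is the output of the algorithm and $x^{\mathcal A}_0=x_0$. *)

(* R^n is modelled as row vectors 'rV[R]_n over R : realType,
   equipped with the Euclidean inner product / norm defined below. *)
From HB Require Import structures.
From mathcomp Require Import all_boot all_order all_algebra.
From mathcomp Require Import all_classical all_reals all_analysis.
Set Implicit Arguments. Unset Strict Implicit. Unset Printing Implicit Defensive.
Import Order.TTheory GRing.Theory Num.Theory.
Import numFieldNormedType.Exports.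
Local Open Scope classical_set_scope.
Local Open Scope ring_scope.

Section Defs.
Variables (R : realType) (n : nat).
Local Notation V := 'rV[R]_n.

Definition dotp (u v : V) : R := \sum_(i < n) u ord0 i * v ord0 i.
Definition enorm (v : V) : R := Num.sqrt (dotp v v).

Definition grad (f : V -> R) (x : V) : V :=
  \row_(i < n) derive f x (delta_mx ord0 i : V).

Definition diam (X : set V) : R := sup [set enorm (x - y) | x in X & y in X].

Definition proj (X : set V) (x : V) : V :=
  xget 0 [set p | X p /\ forall q, X q -> enorm (x - p) <= enorm (x - q)].

Definition argmin (X : set V) (f : V -> R) : V :=
  xget 0 [set p | X p /\ forall q, X q -> f p <= f q].

Definition in_class (X : set V) (alpha l G : R) (f : V -> R) : Prop :=
  (forall x, differentiable f x) /\
  (forall x y,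
      f x + dotp (grad f x) (y - x) + alpha / 2 * enorm (y - x) ^+ 2 <= f y /\
      f y <= f x + dotp (grad f x) (y - x) + l / 2 * enorm (y - x) ^+ 2) /\
  (forall x, X x -> enorm (grad f x) <= G).

Definition theta (X : set V) (x0 : V) (f : nat -> V -> R) (t : nat) : V :=
  if t is 0 then x0 else argmin X (f t).

Definition path_length (X : set V) (x0 : V) (f : nat -> V -> R) (T : nat) : R :=
  \sum_(1 <= t < T.+1) enorm (theta X x0 f t - theta X x0 f t.-1).

(* total cost C_1^T(x); the sequence x is indexed from 0, with x 0 the initial point *)
Definition cost (beta : R) (f : nat -> V -> R) (T : nat) (x : nat -> V) : R :=
  \sum_(1 <= t < T.+1) (f t (x t) + beta / 2 * enorm (x t - x t.-1) ^+ 2).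

Fixpoint ogd (X : set V) (gamma : R) (x0 : V) (f : nat -> V -> R) (t : nat) : V :=
  match t with
  | 0 => x0
  | 1 => x0
  | (s.+1) as t' =>
      let p := ogd X gamma x0 f s in
      proj X (p - gamma *: grad (f s) p)
  end.

End Defs.

From Pilot Require Import Defs.
From HB Require Import structures.
From mathcomp Require Import all_boot all_order all_algebra.
From mathcomp Require Import all_classical all_reals all_analysis.
From mathcomp Require Import ring lra.
Import Order.TTheory GRing.Theory Num.Theory.
Import numFieldNormedType.Exports.
Local Open Scope classical_set_scope.
Local Open Scope ring_scope.

(* Write x_t for the iterates, theta_t = argmin_X f_t and e_t = |x_t - theta_t|.
   With step 1/l, a projected gradient step on an alpha-strongly convex, l-smooth
   function contracts the distance to its minimiser by kappa = sqrt (1 - alpha/l)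
   and moves the iterate by at most sqrt (2 G e / l), where e is the distance
   before the step.  Hence e_t <= kappa e_(t-1) + |theta_t - theta_(t-1)|, so the
   e_t sum to at most L_T / (1 - kappa).  As theta_t minimises f_t, round t costs
   at most G e_t more than any comparator, plus the switching cost
   beta G e_(t-1) / l. *)

Set Implicit Arguments.
Unset Strict Implicit.

Section Euclidean.
Variables (R : realType) (n : nat).
Local Notation V := 'rV[R]_n.
Implicit Types u v w : V.

Lemma dotpC u v : dotp u v = dotp v u.
Proof. by apply: eq_bigr => i _; rewrite mulrC. Qed.

Lemma dotpDl u v w : dotp (u + v) w = dotp u w + dotp v w.
Proof. by rewrite /dotp -big_split; apply: eq_bigr => i _; rewrite mxE mulrDl. Qed.

Lemma dotpNl u w : dotp (- u) w = - dotp u w.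
Proof. by rewrite /dotp -sumrN; apply: eq_bigr => i _; rewrite mxE mulNr. Qed.

Lemma dotpZl (a : R) u w : dotp (a *: u) w = a * dotp u w.
Proof. by rewrite /dotp mulr_sumr; apply: eq_bigr => i _; rewrite mxE mulrA. Qed.

Lemma dotpBl u v w : dotp (u - v) w = dotp u w - dotp v w.
Proof. by rewrite dotpDl dotpNl. Qed.

Lemma dotpNr u w : dotp w (- u) = - dotp w u.
Proof. by rewrite dotpC dotpNl dotpC. Qed.

Lemma dotpDr u v w : dotp w (u + v) = dotp w u + dotp w v.
Proof. by rewrite dotpC dotpDl !(dotpC w). Qed.

Lemma dotpBr u v w : dotp w (u - v) = dotp w u - dotp w v.
Proof. by rewrite dotpC dotpBl !(dotpC w). Qed.

Lemma dotpZr (a : R) u w : dotp w (a *: u) = a * dotp w u.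
Proof. by rewrite dotpC dotpZl dotpC. Qed.

Lemma dotp0l v : dotp 0 v = 0.
Proof. by rewrite -(scale0r 0) dotpZl mul0r. Qed.

Lemma dotp_sqrB u v : dotp (u - v) (u - v) = dotp u u - 2 * dotp u v + dotp v v.
Proof. by rewrite !(dotpBl, dotpBr) (dotpC v u); ring. Qed.

Lemma dotp_ge0 v : 0 <= dotp v v.
Proof. by apply: sumr_ge0 => i _; rewrite -expr2 sqr_ge0. Qed.

Lemma dotp_eq0 v : (dotp v v == 0) = (v == 0).
Proof.
apply/eqP/eqP => [v0|->]; last exact: dotp0l.
have vv i : v ord0 i * v ord0 i = 0.
  by apply: (psumr_eq0P _ v0) => // j _; rewrite -expr2 sqr_ge0.
by apply/rowP => i; apply/eqP; rewrite mxE -[_ == 0]orbb -mulf_eq0 vv.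
Qed.

Lemma enorm_ge0 v : 0 <= enorm v.
Proof. exact: sqrtr_ge0. Qed.

Lemma enorm_sqr v : enorm v ^+ 2 = dotp v v.
Proof. by rewrite sqr_sqrtr // dotp_ge0. Qed.

Lemma enorm0 : enorm (0 : V) = 0.
Proof. by rewrite /enorm dotp0l sqrtr0. Qed.

Lemma enorm_gt0 v : v != 0 -> 0 < enorm v.
Proof. by rewrite -dotp_eq0 => v0; rewrite sqrtr_gt0 lt_def v0 dotp_ge0. Qed.

Lemma enorm_le u v : (enorm u <= enorm v) = (dotp u u <= dotp v v).
Proof. by rewrite ler_sqrt // dotp_ge0. Qed.

Lemma dotp_le_enorm u v : dotp u v <= enorm u * enorm v.
Proof.
have [->|u0] := eqVneq u 0; first by rewrite dotp0l enorm0 mul0r.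
have [->|v0] := eqVneq v 0; first by rewrite dotpC dotp0l enorm0 mulr0.
have ab0 := mulr_gt0 (enorm_gt0 u0) (enorm_gt0 v0).
(* expand 0 <= |b u - a v|^2 = 2 a b (a b - <u, v>), where a = |u|, b = |v| *)
have := dotp_ge0 (enorm v *: u - enorm u *: v).
rewrite dotp_sqrB !(dotpZl, dotpZr) -!enorm_sqr.
by move: (dotp u v) ab0 => c; nra.
Qed.

Lemma enormD u v : enorm (u + v) <= enorm u + enorm v.
Proof.
have ab0 : 0 <= enorm u + enorm v by rewrite addr_ge0 ?enorm_ge0.
rewrite [leLHS]/enorm -(ger0_norm ab0) -sqrtr_sqr ler_sqrt ?sqr_ge0 //.
rewrite sqrrD !enorm_sqr dotpDl !dotpDr (dotpC v u).
by have := dotp_le_enorm u v; lra.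
Qed.

Lemma enormN v : enorm (- v) = enorm v.
Proof. by rewrite /enorm dotpNl dotpC dotpNl opprK. Qed.

Lemma enormB u v : enorm (u - v) = enorm (v - u).
Proof. by rewrite /enorm !dotp_sqrB (dotpC u v); congr Num.sqrt; ring. Qed.

Lemma enorm_continuous : continuous (@enorm R n).
Proof.
have sq_cont : continuous (fun v : V => dotp v v).
  apply: (continuous_big add_continuous) => i _ v.
  by apply: continuousM; apply: coord_continuous.
by move=> v; exact: (continuous_comp (sq_cont v) (@sqrt_continuous R _)).
Qed.

End Euclidean.

Section Projection.
Variables (R : realType) (n : nat) (X : set 'rV[R]_n).
Hypotheses (X0 : X !=set0) (cX : compact X).

Lemma argminP (f : 'rV[R]_n -> R) : continuous f ->
  X (argmin X f) /\ forall q, X q -> f (argmin X f) <= f q.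
Proof.
move=> f_cont; apply: (@xgetPex _ 0 [set p | X p /\ forall q, X q -> f p <= f q]).
have [c Xc c_min] := compact_EVT_min X0 cX (continuous_subspaceT f_cont).
by exists c; split=> [|q Xq]; [rewrite inE in Xc | apply: c_min; rewrite inE].
Qed.

Lemma proj_spec z :
  X (Defs.proj X z) /\ forall q, X q -> enorm (z - Defs.proj X z) <= enorm (z - q).
Proof.
have dist_cont : continuous (fun p : 'rV[R]_n => enorm (z - p)).
  move=> p; have sub_cont : {for p, continuous (fun p : 'rV[R]_n => z - p)}.
    by apply: continuousB; [exact: cst_continuous | exact: cvg_id].
  exact: (continuous_comp sub_cont (@enorm_continuous R n _)).
exact: (argminP dist_cont).
Qed.

Lemma proj_in z : X (Defs.proj X z).
Proof. by case: (proj_spec z). Qed.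

Lemma proj_min z q : X q -> enorm (z - Defs.proj X z) <= enorm (z - q).
Proof. by case: (proj_spec z) => _; apply. Qed.

Hypothesis cvX : convex_set X.

Lemma proj_variational z q : X q -> dotp (z - Defs.proj X z) (q - Defs.proj X z) <= 0.
Proof.
move=> Xq; set p := Defs.proj X z.
set c := dotp (z - p) (q - p); set N := dotp (q - p) (q - p).
rewrite leNgt; apply/negP => c0.
have Nc0 : 0 < N + c by rewrite ltr_wpDl // dotp_ge0.
pose lam := c / (N + c).
have lam0 : 0 < lam by rewrite divr_gt0.
have lam1 : lam <= 1 by rewrite ler_pdivrMr ?mul1r ?lerDr ?dotp_ge0.
have Xw : X (lam *: q + (1 - lam) *: p).
  have := @cvX q p (Itv01 (ltW lam0) lam1); rewrite !inE; apply=> //.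
  exact: proj_in.
have := proj_min z Xw; rewrite enorm_le.
have -> : z - (lam *: q + (1 - lam) *: p) = (z - p) - lam *: (q - p).
  by apply/rowP => i; rewrite !mxE; ring.
rewrite [dotp (_ - _ *: _) _]dotp_sqrB !(dotpZl, dotpZr) -/c -/N.
(* moving from p towards q by lam would bring z closer, as lam * N < c *)
have : lam * (N + c) = c by rewrite divfK // gt_eqF.
nra.
Qed.

End Projection.

Section ProjectedGradientStep.
Variables (R : realType) (n : nat) (X : set 'rV[R]_n) (f : 'rV[R]_n -> R).
Variables (alpha l G : R).
Hypotheses (X0 : X !=set0) (cX : compact X) (cvX : convex_set X).
Hypotheses (f_class : in_class X alpha l G f) (alpha_ge0 : 0 <= alpha).
Hypotheses (alpha_le_l : alpha <= l) (l_gt0 : 0 < l).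

Local Notation theta := (argmin X f).
Local Notation step x := (Defs.proj X (x - l^-1 *: grad f x)).

Lemma in_class_continuous : continuous f.
Proof. by case: f_class => f_diff _ x; apply: differentiable_continuous. Qed.

Lemma argmin_class : X theta /\ forall q, X q -> f theta <= f q.
Proof. exact: (argminP X0 cX in_class_continuous). Qed.

Lemma in_class_gap x y : X x -> X y -> f x - f y <= G * enorm (x - theta).
Proof.
move=> Xx Xy; have [_ [f_bounds grad_le]] := f_class.
have [_ th_min] := argmin_class; have := th_min _ Xy.
have := (f_bounds x theta).1; rewrite -opprB dotpNr enormN.
have := dotp_le_enorm (grad f x) (x - theta).
have := ler_wpM2r (enorm_ge0 (x - theta)) (grad_le x Xx).
have : 0 <= alpha / 2 * enorm (x - theta) ^+ 2 by rewrite mulr_ge0 ?sqr_ge0 ?divr_ge0.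
lra.
Qed.

Lemma pgd_descent x : X x ->
  alpha * enorm (x - theta) ^+ 2 + l * enorm (x - step x) ^+ 2
    <= 2 * l * dotp (x - step x) (x - theta).
Proof.
move=> Xx; have [_ [f_bounds _]] := f_class; have [Xth th_min] := argmin_class.
set g := grad f x; set xp := step x.
have Xxp : X xp by apply: proj_in.
have smooth := (f_bounds x xp).2; have strong := (f_bounds x theta).1.
have var := proj_variational X0 cX cvX (x - l^-1 *: g) Xth.
move: (th_min _ Xxp) smooth strong var; rewrite -/g -/xp.
have -> : xp - x = - (x - xp) by rewrite opprB.
have -> : theta - x = - (x - theta) by rewrite opprB.
have -> : theta - xp = (x - xp) - (x - theta) by apply/rowP => i; rewrite !mxE; ring.
have -> : x - l^-1 *: g - xp = l^-1 *: (l *: (x - xp) - g).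
  by apply/rowP => i; rewrite !mxE; field; rewrite gt_eqF.
move: (x - xp) (x - theta) => d a.
rewrite !enormN !enorm_sqr dotpZl pmulr_rle0 ?invr_gt0 //.
rewrite !(dotpBl, dotpBr, dotpZl, dotpNr); lra.
Qed.

Lemma pgd_contraction x : X x ->
  enorm (step x - theta) <= Num.sqrt (1 - alpha / l) * enorm (x - theta).
Proof.
move=> Xx; have := pgd_descent Xx.
have -> : step x - theta = (x - theta) - (x - step x).
  by apply/rowP => i; rewrite !mxE; ring.
move: (x - step x) (x - theta) => d a descent.
have kappa2_ge0 : 0 <= 1 - alpha / l by rewrite subr_ge0 ler_pdivrMr ?mul1r.
rewrite /enorm -sqrtrM // ler_sqrt ?mulr_ge0 ?dotp_ge0 //.
rewrite -(ler_pM2l l_gt0) dotp_sqrB (dotpC a d).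
have -> : l * ((1 - alpha / l) * dotp a a) = l * dotp a a - alpha * dotp a a.
  by field; rewrite gt_eqF.
by move: descent; rewrite !enorm_sqr; lra.
Qed.

Lemma pgd_step_le x : X x -> l * enorm (x - step x) <= G.
Proof.
move=> Xx; have [_ [_ grad_le]] := f_class; have := grad_le x Xx.
have := proj_variational X0 cX cvX (x - l^-1 *: grad f x) Xx.
have -> : x - l^-1 *: grad f x - step x = l^-1 *: (l *: (x - step x) - grad f x).
  by apply/rowP => i; rewrite !mxE; field; rewrite gt_eqF.
move: (grad f x) (x - step x) => g d.
rewrite dotpZl pmulr_rle0 ?invr_gt0 // dotpBl dotpZl subr_le0 => var g_le.
have [->|d_neq0] := eqVneq d 0.
  by rewrite enorm0 mulr0; apply: le_trans g_le; apply: enorm_ge0.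
rewrite -(ler_pM2r (enorm_gt0 d_neq0)) -mulrA -expr2 enorm_sqr.
apply: le_trans var _; apply: le_trans (dotp_le_enorm g d) _.
by rewrite ler_wpM2r ?enorm_ge0.
Qed.

Lemma pgd_step_sqr x : X x -> enorm (step x - x) ^+ 2 <= 2 * G / l * enorm (x - theta).
Proof.
move=> Xx; rewrite enormB; have := pgd_step_le Xx; have := pgd_descent Xx.
move: (x - step x) (x - theta) => d a descent step_le.
have G_ge0 : 0 <= G by apply: le_trans step_le; rewrite mulr_ge0 ?enorm_ge0 ?ltW.
have [->|d_neq0] := eqVneq d 0.
  by rewrite enorm0 expr0n /= mulr_ge0 ?enorm_ge0 // divr_ge0 ?mulr_ge0 // ltW.
have d_le : enorm d <= 2 * enorm a.
  rewrite -(ler_pM2l (enorm_gt0 d_neq0)) -(ler_pM2l l_gt0).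
  have := ler_wpM2l (ltW l_gt0) (dotp_le_enorm d a).
  have : 0 <= alpha * enorm a ^+ 2 by rewrite mulr_ge0 ?sqr_ge0.
  by move: descent; lra.
rewrite -(ler_pM2l l_gt0).
have -> : l * (2 * G / l * enorm a) = G * (2 * enorm a).
  by field; rewrite gt_eqF.
rewrite expr2 [l * _]mulrA; apply: ler_pM; rewrite ?enorm_ge0 //.
by rewrite mulr_ge0 ?enorm_ge0 ?ltW.
Qed.

End ProjectedGradientStep.

Lemma sum_shift_le (R : numDomainType) (e : nat -> R) (T : nat) :
  e 0%N = 0 -> 0 <= e T ->
  \sum_(1 <= t < T.+1) e t.-1 <= \sum_(1 <= t < T.+1) e t.
Proof.
move=> e0 eT; rewrite big_add1 /=.
have <- : \sum_(0 <= t < T.+1) e t = \sum_(1 <= t < T.+1) e t.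
  by rewrite big_ltn // e0 add0r.
by rewrite big_nat_recr //= lerDl.
Qed.

Lemma sum_le_of_contraction (R : realFieldType) (e p : nat -> R) (k : R) (T : nat) :
  0 <= k -> k < 1 -> e 0%N = 0 -> 0 <= e T ->
  (forall t, (1 <= t <= T)%N -> e t <= k * e t.-1 + p t) ->
  \sum_(1 <= t < T.+1) e t <= (\sum_(1 <= t < T.+1) p t) / (1 - k).
Proof.
move=> k_ge0 k_lt1 e0 eT e_rec; rewrite ler_pdivlMr ?subr_gt0 //.
have rec : \sum_(1 <= t < T.+1) e t <=
    k * \sum_(1 <= t < T.+1) e t.-1 + \sum_(1 <= t < T.+1) p t.
  by rewrite mulr_sumr -big_split; apply: ler_sum_nat.
have := ler_wpM2l k_ge0 (sum_shift_le e0 eT).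
by move: rec; lra.
Qed.

Lemma ogd_in (R : realType) (n : nat) (X : set 'rV[R]_n) (gamma : R) (x0 : 'rV[R]_n)
    (f : nat -> 'rV[R]_n -> R) (t : nat) :
  X !=set0 -> compact X -> X x0 -> X (ogd X gamma x0 f t).
Proof. by move=> X0 cX Xx0; case: t => [|[|t]] //=; apply: proj_in. Qed.

Lemma ogdSS (R : realType) (n : nat) (X : set 'rV[R]_n) (gamma : R) (x0 : 'rV[R]_n)
    (f : nat -> 'rV[R]_n -> R) (t : nat) :
  ogd X gamma x0 f t.+2 =
    Defs.proj X (ogd X gamma x0 f t.+1 - gamma *: grad (f t.+1) (ogd X gamma x0 f t.+1)).
Proof. by []. Qed.

Section OnlineGradientDescent.
Variables (R : realType) (n : nat) (X : set 'rV[R]_n).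
Variables (alpha l G : R) (x0 : 'rV[R]_n) (f : nat -> 'rV[R]_n -> R) (T : nat).
Hypotheses (X0 : X !=set0) (cX : compact X) (cvX : convex_set X) (Xx0 : X x0).
Hypotheses (alpha_gt0 : 0 < alpha) (alpha_le_l : alpha <= l).
Hypothesis f_class : forall t, (1 <= t <= T)%N -> in_class X alpha l G (f t).

Local Notation x := (ogd X l^-1 x0 f).
Local Notation th := (theta X x0 f).

Let l_gt0 : 0 < l. Proof. exact: lt_le_trans alpha_gt0 alpha_le_l. Qed.
Let x_in t : X (x t). Proof. exact: ogd_in. Qed.

Lemma ogd_tracking t : (1 <= t <= T)%N ->
  enorm (x t - th t)
    <= Num.sqrt (1 - alpha / l) * enorm (x t.-1 - th t.-1) + enorm (th t - th t.-1).
Proof.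
case: t => [//|[|t]] /andP[_ tT]; first by rewrite /= subrr enorm0 mulr0 add0r enormB.
have -> : x t.+2 - th t.+2 = (x t.+2 - th t.+1) + (th t.+1 - th t.+2).
  by rewrite addrA subrK.
rewrite (enormB (th t.+2)); apply: le_trans (enormD _ _) _; rewrite lerD2r ogdSS.
exact: pgd_contraction X0 cX cvX (@f_class t.+1 (ltnW tT)) alpha_le_l l_gt0 _ (x_in _).
Qed.

Lemma ogd_move t : (1 <= t <= T)%N ->
  enorm (x t - x t.-1) ^+ 2 <= 2 * G / l * enorm (x t.-1 - th t.-1).
Proof.
case: t => [//|[|t]] /andP[_ tT]; first by rewrite /= !subrr enorm0 expr0n mulr0.
rewrite ogdSS.
exact: pgd_step_sqr X0 cX cvX (@f_class t.+1 (ltnW tT)) (ltW alpha_gt0) l_gt0 _ (x_in _).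
Qed.

Lemma ogd_round_regret (beta : R) (y : nat -> 'rV[R]_n) t :
  0 <= beta -> (1 <= t <= T)%N -> X (y t) ->
  (f t (x t) + beta / 2 * enorm (x t - x t.-1) ^+ 2)
    - (f t (y t) + beta / 2 * enorm (y t - y t.-1) ^+ 2)
  <= G * enorm (x t - th t) + beta * G / l * enorm (x t.-1 - th t.-1).
Proof.
move=> beta_ge0 tT Xyt.
have gap : f t (x t) - f t (y t) <= G * enorm (x t - th t).
  case: t tT Xyt => [//|t] tT Xyt.
  exact: in_class_gap X0 cX (f_class tT) (ltW alpha_gt0) _ _ (x_in _) Xyt.
have := ler_wpM2l (divr_ge0 beta_ge0 (ler0n _ 2)) (ogd_move tT).
have : 0 <= beta / 2 * enorm (y t - y t.-1) ^+ 2 by rewrite mulr_ge0 ?sqr_ge0 ?divr_ge0.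
by move: gap; lra.
Qed.

End OnlineGradientDescent.

Unset Implicit Arguments.

Theorem theorem1 (R : realType) (n : nat) (X : set 'rV[R]_n)
  (alpha l G beta LT : R) (x0 : 'rV[R]_n) (T : nat) :
  X !=set0 -> compact X -> convex_set X ->
  0 < alpha -> alpha <= l -> 0 < G -> 0 <= beta ->
  X x0 -> (1 <= T)%N ->
  0 <= LT -> LT <= diam X * T%:R ->
  forall f : nat -> 'rV[R]_n -> R,
    (forall t, (1 <= t <= T)%N -> in_class X alpha l G (f t)) ->
    path_length X x0 f T <= LT ->
    forall y : nat -> 'rV[R]_n,
      y 0%N = x0 -> (forall t, (1 <= t <= T)%N -> X (y t)) ->
      cost beta f T (ogd X (l^-1) x0 f) - cost beta f T y
        <= (beta / l + 1) * (G / (1 - Num.sqrt (1 - alpha / l))) * LT.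
Proof.
move=> X0 cX cvX alpha_gt0 alpha_le_l G_gt0 beta_ge0 Xx0 _ _ _ f f_class path_le y _ Xy.
have l_gt0 : 0 < l := lt_le_trans alpha_gt0 alpha_le_l.
set kappa := Num.sqrt (1 - alpha / l).
have kappa_lt1 : kappa < 1.
  rewrite -sqrtr1 ltr_sqrt // ltrBlDr ltrDl.
  exact: divr_gt0.
pose e t := enorm (ogd X l^-1 x0 f t - theta X x0 f t).
have e0 : e 0%N = 0 by rewrite /e subrr enorm0.
have errors_le : \sum_(1 <= t < T.+1) e t <= LT / (1 - kappa).
  apply: le_trans (sum_le_of_contraction (sqrtr_ge0 _) kappa_lt1 e0 (enorm_ge0 _)
    (ogd_tracking X0 cX cvX Xx0 alpha_gt0 alpha_le_l f_class)) _.
  by apply: ler_wpM2r path_le; rewrite invr_ge0 subr_ge0 ltW.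
have regret_le : cost beta f T (ogd X l^-1 x0 f) - cost beta f T y
    <= \sum_(1 <= t < T.+1) (G * e t + beta * G / l * e t.-1).
  rewrite /cost /e -sumrB; apply: ler_sum_nat => t; rewrite ltnS => tT.
  exact (ogd_round_regret X0 cX cvX Xx0 alpha_gt0 alpha_le_l f_class beta_ge0 tT (Xy t tT)).
apply: le_trans regret_le _; rewrite big_split -!mulr_sumr /=.
have c_ge0 : 0 <= beta * G / l by rewrite divr_ge0 ?mulr_ge0 ?(ltW G_gt0) ?(ltW l_gt0).
have -> : (beta / l + 1) * (G / (1 - kappa)) * LT = (G + beta * G / l) * (LT / (1 - kappa)).
  by field; rewrite !gt_eqF ?subr_gt0.
apply: le_trans (ler_wpM2l (addr_ge0 (ltW G_gt0) c_ge0) errors_le).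
by rewrite mulrDl lerD2l ler_wpM2l // sum_shift_le ?enorm_ge0.
Qed.
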